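(* Let $P\in\mathcal{P}$ and $\nu:\mathcal{P}\to\mathcal{H}$. Then $\nu$ is pathwise differentiable at $P$ with local parameter $\dot{\nu}_P=\eta_P$ if both of the following hold: (i) $\eta_P:\dot{\mathcal{P}}_P\to\mathcal{H}$ is bounded and linear, and there exists a set of scores $\mathcal{S}(P)$ whose $L^2(P)$-closure equals $\dot{\mathcal{P}}_P$ such that for every $s\in\mathcal{S}(P)$ there is at least one submodel $\{P_\epsilon:\epsilon\}\in\mathscr{P}(P,\mathcal{P},s)$ with $\|\nu(P_\epsilon)-\nu(P)-\epsilon\,\eta_P(s)\|_{\mathcal{H}}=o(\epsilon)$; and (ii) $\nu$ is locally Lipschitz at $P$: there exist $c,\delta\in(0,\infty)$ such that $\|\nu(P_1)-\nu(P_2)\|_{\mathcal{H}}\le cH(P_1,P_2)$ for all $P_1,P_2\in B_\delta(P)$, where $B_\delta(P)=\{P'\in\mathcal{P}:H(P,P')\le\delta\}$.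
   Context: Let $(\mathcal{Z},\mathbf{B})$ be a Polish space and $\mathcal{P}$ a model of probability distributions on it dominated by a $\sigma$-finite measure $\lambda$. $H(P,P')=[\int(\sqrt{dP}-\sqrt{dP'})^2]^{1/2}$ is the Hellinger distance. For $P\in\mathcal{P}$ and $s\in L^2(P)$, $\mathscr{P}(P,\mathcal{P},s)$ is the set of submodels $\{P_\epsilon:\epsilon\in[0,\delta)\}\subset\mathcal{P}$ with $\|p_\epsilon^{1/2}-p^{1/2}-\epsilon sp^{1/2}/2\|_{L^2(\lambda)}=o(\epsilon)$ as $\epsilon\to0$ ($p_\epsilon,p$ the $\lambda$-densities). The tangent set at $P$ is $\{s:\mathscr{P}(P,\mathcal{P},s)\neq\emptyset\}$ and the tangent space $\dot{\mathcal{P}}_P$ its closed linear span in $L^2(P)$. $\mathcal{H}$ is a real separable Hilbert space. $\nu$ is pathwise differentiable at $P$ with local parameter $\dot{\nu}_P$ if $\dot{\nu}_P:\dot{\mathcal{P}}_P\to\mathcal{H}$ is continuous linear and $\|\nu(P_\epsilon)-\nu(P)-\epsilon\dot{\nu}_P(s)\|_{\mathcal{H}}=o(\epsilon)$ for every $s$ in the tangent set and every submodel in $\mathscr{P}(P,\mathcal{P},s)$. *)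

From mathcomp Require Import all_boot all_order all_algebra.
From mathcomp Require Import all_classical all_reals all_analysis.
Import Order.TTheory GRing.Theory Num.Theory numFieldNormedType.Exports.
Set Implicit Arguments. Unset Strict Implicit. Unset Printing Implicit Defensive.
Local Open Scope classical_set_scope.
Local Open Scope ring_scope.

Section Defs.
Context {R : realType} {d : measure_display} {Z : measurableType d}.
Variable lam : {measure set Z -> \bar R}.

Definition is_density (p : Z -> R) : Prop :=
  [/\ measurable_fun setT p, (forall x, 0 <= p x) & (\int[lam]_x (p x)%:E = 1)%E].

Definition sqnormL (f : Z -> R) : \bar R := (\int[lam]_x ((f x ^+ 2)%:E))%E.

(* squared L^2(P) norm, P having lambda-density p: int f^2 dP = int f^2 p dlambda *)
Definition sqnormP (p f : Z -> R) : \bar R := (\int[lam]_x ((f x ^+ 2 * p x)%:E))%E.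

Definition inL2P (p f : Z -> R) : Prop :=
  measurable_fun setT f /\ (sqnormP p f < +oo)%E.

Definition hellinger (p1 p2 : Z -> R) : R :=
  Num.sqrt (fine (sqnormL (fun x => Num.sqrt (p1 x) - Num.sqrt (p2 x)))).

(* the set of submodels scrP(P, M, s): families eps |-> q eps, eps in [0,delta),
   inside M, differentiable in quadratic mean with score s *)
Definition submodels (M : set (Z -> R)) (p s : Z -> R) : set (R -> Z -> R) :=
  [set q : R -> Z -> R | exists delta : R, 0 < delta /\
     (forall eps, 0 <= eps < delta -> M (q eps)) /\
     (forall e : R, 0 < e -> \forall eps \near 0^'+,
        (sqnormL (fun x => (Num.sqrt (q eps x) - Num.sqrt (p x)
                           - eps * s x * Num.sqrt (p x) / 2)%R)
          <= ((e * eps) ^+ 2)%:E)%E)].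

Definition tangent_set (M : set (Z -> R)) (p : Z -> R) : set (Z -> R) :=
  [set s | inL2P p s /\ submodels M p s !=set0].

Definition lin_span (A : set (Z -> R)) : set (Z -> R) :=
  [set f | exists n (c : 'I_n -> R) (g : 'I_n -> Z -> R),
     (forall i, A (g i)) /\ f = (fun x => \sum_(i < n) c i * g i x)].

(* closure in L^2(P) (as a set of representatives) *)
Definition L2P_closure (p : Z -> R) (A : set (Z -> R)) : set (Z -> R) :=
  [set f | inL2P p f /\ forall e : R, 0 < e ->
     exists2 t, A t & (sqnormP p (fun x => (f x - t x)%R) < (e ^+ 2)%:E)%E].

Definition tangent_space (M : set (Z -> R)) (p : Z -> R) : set (Z -> R) :=
  L2P_closure p (lin_span (tangent_set M p)).

Context {H : normedModType R}.

Definition lin_on (A : set (Z -> R)) (eta : (Z -> R) -> H) : Prop :=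
  forall f g (a b : R), A f -> A g ->
    eta (fun x => a * f x + b * g x) = a *: eta f + b *: eta g.

Definition cont_on (p : Z -> R) (A : set (Z -> R)) (eta : (Z -> R) -> H) : Prop :=
  forall f, A f -> forall e : R, 0 < e -> exists2 dl : R, 0 < dl &
    forall g, A g -> (sqnormP p (fun x => (g x - f x)%R) < (dl ^+ 2)%:E)%E ->
      `|eta g - eta f| < e.

Definition bounded_on (p : Z -> R) (A : set (Z -> R)) (eta : (Z -> R) -> H) : Prop :=
  exists C : R, forall f, A f ->
    ((`|eta f| ^+ 2)%:E <= (C ^+ 2)%:E * sqnormP p f)%E.

Definition pathwise_differentiable (M : set (Z -> R)) (nu : (Z -> R) -> H)
    (p : Z -> R) (eta : (Z -> R) -> H) : Prop :=
  [/\ lin_on (tangent_space M p) eta, cont_on p (tangent_space M p) eta &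
      forall s, tangent_set M p s -> forall q, submodels M p s q ->
        forall e : R, 0 < e -> \forall eps \near 0^'+,
          `|nu (q eps) - nu p - eps *: eta s| <= e * eps].

End Defs.

Definition real_separable_hilbert {R : realType} (H : normedModType R) : Prop :=
  [/\ exists ip : H -> H -> R,
        (forall x y, ip x y = ip y x) /\
        (forall (a : R) x y z, ip (a *: x + y) z = a * ip x z + ip y z) /\
        (forall x, `|x| = Num.sqrt (ip x x)),
      (forall u : nat -> H,
         (forall e : R, 0 < e -> exists N, forall m n, (N <= m)%N -> (N <= n)%N ->
            `|u m - u n| < e) ->
         exists l : H, forall e : R, 0 < e -> exists N, forall n, (N <= n)%N ->
            `|u n - l| < e) &
      exists u : nat -> H, forall (x : H) (e : R), 0 < e -> exists n, `|x - u n| < e].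

From mathcomp Require Import all_boot all_order all_algebra.
From mathcomp Require Import all_classical all_reals all_analysis.
From mathcomp Require Import ring lra measurable_realfun.
Import Order.TTheory GRing.Theory Num.Theory numFieldNormedType.Exports.
Local Open Scope classical_set_scope.
Local Open Scope ring_scope.

(* Continuity of eta on the tangent space follows from boundedness and
   linearity, since the tangent space is closed under differences.  For the
   expansion along a submodel q with score s, pick s' in S with
   ||s - s'||_{L2(P)} <= r and the submodel q' along which nu expands with
   derivative eta s'.  Differentiability in quadratic mean of q and q' gives
   H(q_eps, q'_eps) <= 4 r eps, and both q_eps, q'_eps eventually lie in the
   Hellinger ball around P; local Lipschitzness then bounds
   ||nu(q_eps) - nu(q'_eps)|| by 4 c r eps, while
   ||eps (eta s' - eta s)|| <= |C| r eps by boundedness.  Hence the remainder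
   along q is eventually at most (4 c + 1 + |C|) r eps, with r arbitrary. *)

Section SquareBounds.
Context {R : realFieldType}.
Implicit Types a b c e P Q S : R.

Lemma sqr_add2_le a b : (a + b) ^+ 2 <= 2 * a ^+ 2 + 2 * b ^+ 2.
Proof. have := sqr_ge0 (a - b); nra. Qed.

Lemma sqr_add3_le a b c :
  (a + b + c) ^+ 2 <= 3 * a ^+ 2 + 3 * b ^+ 2 + 3 * c ^+ 2.
Proof.
have := sqr_ge0 (a - b); have := sqr_ge0 (b - c); have := sqr_ge0 (a - c); nra.
Qed.

(* With [Q = sqrt q x] and [P = sqrt p x], the pointwise remainder in the
   differentiability in quadratic mean of a submodel with score [S = s x]. *)
Definition dqm_term Q P S e := Q - P - e * S * P / 2.

Lemma sqr_sub_le_dqm_term Q P S e :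
  (P - Q) ^+ 2 <= 2 * dqm_term Q P S e ^+ 2 + e ^+ 2 / 2 * (S ^+ 2 * P ^+ 2).
Proof.
have -> : P - Q = - dqm_term Q P S e + - (e * S * P / 2) by rewrite /dqm_term; ring.
have -> : e ^+ 2 / 2 * (S ^+ 2 * P ^+ 2) = 2 * (e * S * P / 2) ^+ 2 by field.
by rewrite -(sqrrN (_ / 2)) -[dqm_term _ _ _ _ ^+ 2]sqrrN sqr_add2_le.
Qed.

Lemma sqr_sub_le_dqm_terms Q1 Q2 P S1 S2 e :
  (Q1 - Q2) ^+ 2 <= 3 * dqm_term Q1 P S1 e ^+ 2 + 3 * dqm_term Q2 P S2 e ^+ 2
                    + 3 * e ^+ 2 / 4 * ((S1 - S2) ^+ 2 * P ^+ 2).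
Proof.
have -> : Q1 - Q2 = dqm_term Q1 P S1 e + - dqm_term Q2 P S2 e + e * (S1 - S2) * P / 2.
  by rewrite /dqm_term; ring.
have -> : 3 * e ^+ 2 / 4 * ((S1 - S2) ^+ 2 * P ^+ 2) = 3 * (e * (S1 - S2) * P / 2) ^+ 2.
  by field.
by rewrite -[dqm_term Q2 _ _ _ ^+ 2]sqrrN sqr_add3_le.
Qed.

End SquareBounds.

Section LinearSpan.
Context {R : realType} {d : measure_display} {Z : measurableType d}.
Implicit Types (A : set (Z -> R)) (f g : Z -> R).

Lemma lin_span_sub A : A `<=` lin_span A.
Proof.
move=> f Af; exists 1%N, (fun _ => 1), (fun _ => f); split => //.
by apply/funext => x; rewrite big_ord1 mul1r.
Qed.

Lemma lin_spanB A f g : lin_span A f -> lin_span A g ->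
  lin_span A (fun x => f x - g x).
Proof.
move=> [n [c [h [hA ->]]]] [m [c' [h' [hA' ->]]]].
exists (n + m)%N,
  (fun i => match fintype.split i with inl j => c j | inr j => - c' j end),
  (fun i => match fintype.split i with inl j => h j | inr j => h' j end).
split; first by move=> i; case: (fintype.split i).
apply/funext => x; rewrite big_split_ord -sumrN.
congr (_ + _); apply: eq_bigr => i _.
  by rewrite (unsplitK (inl i)).
by rewrite (unsplitK (inr i)) mulNr.
Qed.

Lemma lin_span_measurable A f : (forall g, A g -> measurable_fun setT g) ->
  lin_span A f -> measurable_fun setT f.
Proof.
move=> mA [n [c [h [hA ->]]]].
by apply: measurable_sum => i; apply: measurable_funM => //; apply: mA.
Qed.

End LinearSpan.

Section Pathwise.
Context {R : realType} {d : measure_display} {Z : measurableType d}.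
Variable lam : {measure set Z -> \bar R}.
Implicit Types (A B : set (Z -> R)) (f g u v q s : Z -> R).

Lemma measurable_fun_sqrt {f} :
  measurable_fun setT f -> measurable_fun setT (fun x => Num.sqrt (f x)).
Proof.
move=> mf; apply: (@measurableT_comp _ _ _ _ _ _ (@Num.sqrt R)) => //.
apply: continuous_measurable_fun; exact: sqrt_continuous.
Qed.

Lemma sqnormL_ge0 f : (0 <= sqnormL lam f)%E.
Proof. by apply: integral_ge0 => x _; rewrite lee_fin sqr_ge0. Qed.

Lemma ge0_integralZl_fin (a : R) g : 0 <= a -> measurable_fun setT g ->
  (forall x, 0 <= g x) ->
  (\int[lam]_x (a * g x)%:E = a%:E * \int[lam]_x (g x)%:E)%E.
Proof.
move=> a0 mg g0; under eq_integral do rewrite EFinM.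
by rewrite ge0_integralZl_EFin // => [x _|]; [rewrite lee_fin | exact/measurable_EFinP].
Qed.

Lemma ge0_integral_le_comb2 f g1 g2 (a1 a2 : R) :
  measurable_fun setT f -> measurable_fun setT g1 -> measurable_fun setT g2 ->
  (forall x, 0 <= f x) -> (forall x, 0 <= g1 x) -> (forall x, 0 <= g2 x) ->
  0 <= a1 -> 0 <= a2 -> (forall x, f x <= a1 * g1 x + a2 * g2 x) ->
  (\int[lam]_x (f x)%:E
     <= a1%:E * \int[lam]_x (g1 x)%:E + a2%:E * \int[lam]_x (g2 x)%:E)%E.
Proof.
move=> mf m1 m2 f0 g10 g20 a10 a20 fle.
have mZ a g : measurable_fun setT g -> measurable_fun setT (fun x => (a * g x)%:E).
  by move=> mg; apply/measurable_EFinP/measurable_funM.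
rewrite -!ge0_integralZl_fin // -ge0_integralD //; last 4 first.
- by move=> x _; rewrite lee_fin mulr_ge0.
- exact: mZ.
- by move=> x _; rewrite lee_fin mulr_ge0.
- exact: mZ.
apply: ge0_le_integral => //.
- by move=> x _; rewrite lee_fin.
- exact/measurable_EFinP.
- by apply: emeasurable_funD; apply: mZ.
- by move=> x _; rewrite -EFinD lee_fin.
Qed.

Lemma ge0_integral_le_comb3 f g1 g2 g3 (a1 a2 a3 : R) :
  measurable_fun setT f -> measurable_fun setT g1 -> measurable_fun setT g2 ->
  measurable_fun setT g3 ->
  (forall x, 0 <= f x) -> (forall x, 0 <= g1 x) -> (forall x, 0 <= g2 x) ->
  (forall x, 0 <= g3 x) -> 0 <= a1 -> 0 <= a2 -> 0 <= a3 ->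
  (forall x, f x <= a1 * g1 x + a2 * g2 x + a3 * g3 x) ->
  (\int[lam]_x (f x)%:E <= a1%:E * \int[lam]_x (g1 x)%:E
     + a2%:E * \int[lam]_x (g2 x)%:E + a3%:E * \int[lam]_x (g3 x)%:E)%E.
Proof.
move=> mf m1 m2 m3 f0 g10 g20 g30 a10 a20 a30 fle.
pose g12 x := a1 * g1 x + a2 * g2 x.
have m12 : measurable_fun setT g12.
  by apply: measurable_funD; apply: measurable_funM.
have g120 x : 0 <= g12 x by rewrite addr_ge0 // mulr_ge0.
have f_le x : f x <= 1 * g12 x + a3 * g3 x by rewrite mul1r.
apply: (le_trans
  (ge0_integral_le_comb2 _ _ _ _ _ mf m12 m3 f0 g120 g30 ler01 a30 f_le)).
by rewrite mul1e leeD2r //; apply: ge0_integral_le_comb2.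
Qed.

Variable p : Z -> R.

Lemma sqnormP_subrr f : sqnormP lam p (fun x => f x - f x) = 0%E.
Proof.
rewrite /sqnormP (eq_integral (fun _ => 0%E)) ?integral0 // => x _.
by rewrite subrr expr0n /= mul0r.
Qed.

Lemma L2P_closure_sub A : A `<=` inL2P lam p -> A `<=` L2P_closure lam p A.
Proof.
move=> AL2 f Af; split; first exact: AL2.
by move=> e e0; exists f => //; rewrite sqnormP_subrr lte_fin exprn_gt0.
Qed.

Lemma L2P_closureS A B : A `<=` B -> L2P_closure lam p A `<=` L2P_closure lam p B.
Proof.
move=> AB f [fL2 fA]; split => // e e0.
by have [t At ft] := fA e e0; exists t => //; apply: AB.
Qed.

Hypotheses (mp : measurable_fun setT p) (p_ge0 : forall x, 0 <= p x).

Lemma sqnormP_ge0 f : (0 <= sqnormP lam p f)%E.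
Proof. by apply: integral_ge0 => x _; rewrite lee_fin mulr_ge0 ?sqr_ge0. Qed.

Lemma inL2P_sqnormP_le f : inL2P lam p f ->
  exists2 b : R, 0 <= b & (sqnormP lam p f <= (b ^+ 2)%:E)%E.
Proof.
move=> [_ fin]; have N0 := sqnormP_ge0 f.
exists (Num.sqrt (fine (sqnormP lam p f))) => //.
by rewrite sqr_sqrtr ?fine_ge0 // fineK // ge0_fin_numE.
Qed.

Lemma sqnormPB_le u v : measurable_fun setT u -> measurable_fun setT v ->
  (sqnormP lam p (fun x => (u x - v x)%R)
     <= 2%:E * sqnormP lam p u + 2%:E * sqnormP lam p v)%E.
Proof.
move=> mu mv; have mN (w : Z -> R) : measurable_fun setT w ->
    measurable_fun setT (fun x => w x ^+ 2 * p x).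
  by move=> mw; apply: measurable_funM => //; apply: measurable_funX.
apply: ge0_integral_le_comb2 => //; try by move=> x; rewrite mulr_ge0 ?sqr_ge0.
- exact: (mN (fun x => u x - v x) (measurable_funB mu mv)).
- exact: mN.
- exact: mN.
- move=> x; have := sqr_add2_le (u x) (- v x); rewrite sqrrN => uv.
  by have := ler_wpM2r (p_ge0 x) uv; rewrite mulrDl -!mulrA.
Qed.

Lemma inL2PB f g : inL2P lam p f -> inL2P lam p g ->
  inL2P lam p (fun x => f x - g x).
Proof.
move=> [mf fin_f] [mg fin_g]; split; first exact: measurable_funB.
apply: le_lt_trans (sqnormPB_le _ _ mf mg) _.
by apply: lte_add_pinfty; rewrite lte_mul_pinfty ?lee_fin.
Qed.

Lemma L2P_closureB A f g :
  (forall u v, A u -> A v -> A (fun x => u x - v x)) ->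
  (forall u, A u -> measurable_fun setT u) ->
  L2P_closure lam p A f -> L2P_closure lam p A g ->
  L2P_closure lam p A (fun x => f x - g x).
Proof.
move=> AB mA [fL2 fA] [gL2 gA]; split; first exact: inL2PB.
move=> e e0; have e20 : 0 < e / 2 by rewrite divr_gt0.
have [t1 At1 ft1] := fA _ e20; have [t2 At2 gt2] := gA _ e20.
exists (fun x => t1 x - t2 x); first exact: AB.
have -> : sqnormP lam p (fun x => f x - g x - (t1 x - t2 x))
    = sqnormP lam p (fun x => (f x - t1 x) - (g x - t2 x)).
  by congr (sqnormP lam p _); apply/funext => x; ring.
apply: le_lt_trans (sqnormPB_le _ _ _ _) _.
- by apply: measurable_funB; [case: fL2 | exact: mA].
- by apply: measurable_funB; [case: gL2 | exact: mA].
have -> : (e ^+ 2)%:E = (2%:E * ((e / 2) ^+ 2)%:E + 2%:E * ((e / 2) ^+ 2)%:E)%E.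
  by rewrite -!EFinM -EFinD; congr EFin; field.
by apply: lteD; rewrite lte_pmul2l ?lte_fin.
Qed.

Variable M : set (Z -> R).

Lemma tangent_set_sub_space : tangent_set lam M p `<=` tangent_space lam M p.
Proof.
move=> s ts; apply: (@L2P_closureS (tangent_set lam M p)); first exact: lin_span_sub.
by apply: L2P_closure_sub ts => f [].
Qed.

Lemma tangent_spaceB f g : tangent_space lam M p f -> tangent_space lam M p g ->
  tangent_space lam M p (fun x => f x - g x).
Proof.
apply: L2P_closureB; first exact: lin_spanB.
by move=> u; apply: lin_span_measurable => h [[]].
Qed.

Section BoundedLinear.
Context {H : normedModType R}.
Implicit Type eta : (Z -> R) -> H.

Lemma lin_onB {A eta f g} : lin_on A eta -> A f -> A g ->
  eta (fun x => f x - g x) = eta f - eta g.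
Proof.
move=> etaL Af Ag; have := etaL f g 1 (-1) Af Ag.
rewrite scale1r scaleN1r => <-; congr eta.
by apply/funext => x; rewrite mul1r mulN1r.
Qed.

Lemma bounded_on_le {A eta} {C a : R} {f} :
  (forall g, A g -> ((`|eta g| ^+ 2)%:E <= (C ^+ 2)%:E * sqnormP lam p g)%E) ->
  A f -> 0 <= a -> (sqnormP lam p f <= (a ^+ 2)%:E)%E -> `|eta f| <= `|C| * a.
Proof.
move=> etaC Af a0 fa.
have C20 : (0 <= (C ^+ 2)%:E)%E by rewrite lee_fin sqr_ge0.
have := le_trans (etaC f Af) (lee_wpmul2l C20 fa).
rewrite -EFinM lee_fin -exprMn => etaCa.
by rewrite -ler_sqr ?nnegrE ?mulr_ge0 // exprMn (real_normK (num_real C)) -exprMn.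
Qed.

Lemma bounded_lin_cont_on A eta :
  (forall f g, A f -> A g -> A (fun x => f x - g x)) ->
  lin_on A eta -> bounded_on lam p A eta -> cont_on lam p A eta.
Proof.
move=> AB etaL [C etaC] f Af e e0.
have C1 : 0 < `|C| + 1 by rewrite ltr_pwDr.
exists (e / (`|C| + 1)) => [|g Ag gf]; first by rewrite divr_gt0.
rewrite -(lin_onB etaL) //.
apply: le_lt_trans (bounded_on_le etaC (AB _ _ Ag Af) _ (ltW gf)) _.
  by rewrite divr_ge0 ?ltW.
by rewrite mulrA ltr_pdivrMr //; nra.
Qed.

End BoundedLinear.

Lemma hellinger_le_sqrt (p1 p2 : Z -> R) (B : R) :
  (sqnormL lam (fun x => (Num.sqrt (p1 x) - Num.sqrt (p2 x))%R) <= B%:E)%E ->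
  hellinger lam p1 p2 <= Num.sqrt B.
Proof.
move: (sqnormL_ge0 (fun x => Num.sqrt (p1 x) - Num.sqrt (p2 x))).
rewrite /hellinger; case: sqnormL => // r; rewrite !lee_fin /= => r0 rB.
by rewrite ler_sqrt // (le_trans r0).
Qed.

Definition dqm_residual q s (eps : R) : Z -> R :=
  fun x => dqm_term (Num.sqrt (q x)) (Num.sqrt (p x)) (s x) eps.

Lemma measurable_dqm_residual q s eps : measurable_fun setT q ->
  measurable_fun setT s -> measurable_fun setT (dqm_residual q s eps).
Proof.
move=> mq ms; have msp := measurable_fun_sqrt mp.
apply: measurable_funB; first exact/measurable_funB/msp/measurable_fun_sqrt.
apply: measurable_funM; last exact: measurable_cst.
by apply: measurable_funM => //; apply: measurable_funM => //; apply: measurable_cst.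
Qed.

Lemma hellinger_dqm_le q s (eps a b : R) :
  measurable_fun setT q -> measurable_fun setT s ->
  0 <= eps -> 0 <= a -> 0 <= b ->
  (sqnormL lam (dqm_residual q s eps) <= ((a * eps) ^+ 2)%:E)%E ->
  (sqnormP lam p s <= (b ^+ 2)%:E)%E ->
  hellinger lam p q <= (2 * a + b) * eps.
Proof.
move=> mq ms eps0 a0 b0 qa sb.
rewrite -[X in _ <= X]ger0_norm ?mulr_ge0 ?addr_ge0 ?mulr_ge0 //.
rewrite -sqrtr_sqr; apply: hellinger_le_sqrt.
have eps20 : 0 <= eps ^+ 2 / 2 by rewrite divr_ge0 ?sqr_ge0.
apply: (@le_trans _ _ (2%:E * sqnormL lam (dqm_residual q s eps)
                      + (eps ^+ 2 / 2)%:E * sqnormP lam p s)%E).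
  apply: ge0_integral_le_comb2 => //;
    try by move=> x /=; rewrite ?sqr_ge0 // mulr_ge0 ?sqr_ge0.
  - by apply/measurable_funX/measurable_funB; apply: measurable_fun_sqrt.
  - exact/measurable_funX/measurable_dqm_residual.
  - by apply: measurable_funM => //; apply: measurable_funX.
  - move=> x /=.
    have le := sqr_sub_le_dqm_term (Num.sqrt (q x)) (Num.sqrt (p x)) (s x) eps.
    by rewrite (sqr_sqrtr (p_ge0 x)) in le.
apply: le_trans (leeD (lee_wpmul2l _ qa) (lee_wpmul2l _ sb)) _; rewrite ?lee_fin //.
have := mulr_ge0 a0 b0; have := sqr_ge0 eps; have := sqr_ge0 a; have := sqr_ge0 b.
nra.
Qed.

Lemma hellinger_dqm_pair_le q1 q2 s1 s2 (eps a b : R) :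
  measurable_fun setT q1 -> measurable_fun setT q2 ->
  measurable_fun setT s1 -> measurable_fun setT s2 ->
  0 <= eps -> 0 <= a -> 0 <= b ->
  (sqnormL lam (dqm_residual q1 s1 eps) <= ((a * eps) ^+ 2)%:E)%E ->
  (sqnormL lam (dqm_residual q2 s2 eps) <= ((a * eps) ^+ 2)%:E)%E ->
  (sqnormP lam p (fun x => (s1 x - s2 x)%R) <= (b ^+ 2)%:E)%E ->
  hellinger lam q1 q2 <= (3 * a + b) * eps.
Proof.
move=> mq1 mq2 ms1 ms2 eps0 a0 b0 q1a q2a sb.
rewrite -[X in _ <= X]ger0_norm ?mulr_ge0 ?addr_ge0 ?mulr_ge0 //.
rewrite -sqrtr_sqr; apply: hellinger_le_sqrt.
have eps20 : 0 <= 3 * eps ^+ 2 / 4 by rewrite divr_ge0 ?mulr_ge0 ?sqr_ge0.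
apply: (@le_trans _ _ (3%:E * sqnormL lam (dqm_residual q1 s1 eps)
                      + 3%:E * sqnormL lam (dqm_residual q2 s2 eps)
                      + (3 * eps ^+ 2 / 4)%:E
                        * sqnormP lam p (fun x => (s1 x - s2 x)%R))%E).
  apply: ge0_integral_le_comb3 => //;
    try by move=> x /=; rewrite ?sqr_ge0 // mulr_ge0 ?sqr_ge0.
  - by apply/measurable_funX/measurable_funB; apply: measurable_fun_sqrt.
  - exact/measurable_funX/measurable_dqm_residual.
  - exact/measurable_funX/measurable_dqm_residual.
  - apply: measurable_funM => //; apply: measurable_funX; exact: measurable_funB.
  - move=> x /=.
    have le := sqr_sub_le_dqm_terms (Num.sqrt (q1 x)) (Num.sqrt (q2 x))
      (Num.sqrt (p x)) (s1 x) (s2 x) eps.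
    by rewrite (sqr_sqrtr (p_ge0 x)) in le.
apply: le_trans (leeD (leeD (lee_wpmul2l _ q1a) (lee_wpmul2l _ q2a))
                      (lee_wpmul2l _ sb)) _; rewrite ?lee_fin //.
have := mulr_ge0 a0 b0; have := sqr_ge0 eps; have := sqr_ge0 a; have := sqr_ge0 b.
nra.
Qed.

Hypothesis M_density : forall q, M q -> is_density lam q.

Lemma submodel_near_mem s (q : R -> Z -> R) : submodels lam M p s q ->
  \forall eps \near 0^'+, M (q eps).
Proof.
move=> [delta [delta0 [qM _]]]; near=> eps; apply: qM.
have eps0 : 0 < eps by near: eps; exact: nbhs_right_gt.
have eps_delta : eps < delta by near: eps; exact: nbhs_right_lt.
by rewrite (ltW eps0) eps_delta.
Unshelve. all: by end_near.
Qed.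

Lemma submodel_near_hellinger s (q : R -> Z -> R) (dl : R) : inL2P lam p s ->
  submodels lam M p s q -> 0 < dl ->
  \forall eps \near 0^'+, hellinger lam p (q eps) <= dl.
Proof.
move=> sL2 qs dl0; have /inL2P_sqnormP_le[b b0 sb] := sL2.
have b2 : 0 < 2 + b by rewrite ltr_wpDr.
have [_ [_ [_ q_dqm]]] := qs.
near=> eps.
have eps0 : 0 < eps by near: eps; exact: nbhs_right_gt.
have eps_small : eps < dl / (2 + b).
  by near: eps; apply: nbhs_right_lt; rewrite divr_gt0.
have Mq : M (q eps) by near: eps; exact: submodel_near_mem qs.
have [mq _ _] := M_density _ Mq.
have res : (sqnormL lam (dqm_residual (q eps) s eps) <= ((1 * eps) ^+ 2)%:E)%E.
  by near: eps; exact: q_dqm 1 ltr01.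
apply: le_trans (hellinger_dqm_le _ _ _ _ _ mq sL2.1 (ltW eps0) ler01 b0 res sb) _.
by rewrite mulr1 mulrC ltW // -ltr_pdivlMr.
Unshelve. all: by end_near.
Qed.

Context {H : normedModType R}.
Variables (nu : (Z -> R) -> H) (c dl : R).
Hypotheses (c_ge0 : 0 <= c) (dl_gt0 : 0 < dl).
Hypothesis nu_lip : forall p1 p2, M p1 -> M p2 ->
  hellinger lam p p1 <= dl -> hellinger lam p p2 <= dl ->
  `|nu p1 - nu p2| <= c * hellinger lam p1 p2.

Lemma nu_submodels_near_le {s s'} {q q' : R -> Z -> R} {r : R} :
  inL2P lam p s -> inL2P lam p s' ->
  submodels lam M p s q -> submodels lam M p s' q' -> 0 < r ->
  (sqnormP lam p (fun x => (s x - s' x)%R) <= (r ^+ 2)%:E)%E ->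
  \forall eps \near 0^'+, `|nu (q eps) - nu (q' eps)| <= 4 * c * r * eps.
Proof.
move=> sL2 s'L2 qs q's r0 ss'.
have [_ [_ [_ q_dqm]]] := qs; have [_ [_ [_ q'_dqm]]] := q's.
near=> eps.
have eps0 : 0 < eps by near: eps; exact: nbhs_right_gt.
have Mq : M (q eps) by near: eps; exact: submodel_near_mem qs.
have Mq' : M (q' eps) by near: eps; exact: submodel_near_mem q's.
have [mq _ _] := M_density _ Mq; have [mq' _ _] := M_density _ Mq'.
have Hq : hellinger lam p (q eps) <= dl.
  by near: eps; exact: submodel_near_hellinger sL2 qs dl_gt0.
have Hq' : hellinger lam p (q' eps) <= dl.
  by near: eps; exact: submodel_near_hellinger s'L2 q's dl_gt0.
have res : (sqnormL lam (dqm_residual (q eps) s eps) <= ((r * eps) ^+ 2)%:E)%E.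
  by near: eps; exact: q_dqm r r0.
have res' : (sqnormL lam (dqm_residual (q' eps) s' eps) <= ((r * eps) ^+ 2)%:E)%E.
  by near: eps; exact: q'_dqm r r0.
apply: le_trans (nu_lip _ _ Mq Mq' Hq Hq') _.
have -> : 4 * c * r * eps = c * ((3 * r + r) * eps) by ring.
rewrite ler_wpM2l //.
exact: hellinger_dqm_pair_le _ _ _ _ _ _ _ mq mq' sL2.1 s'L2.1 (ltW eps0)
  (ltW r0) (ltW r0) res res' ss'.
Unshelve. all: by end_near.
Qed.

Lemma submodel_expansion_transfer {s s'} {q q' : R -> Z -> R} {v v' : H} {r k : R} :
  inL2P lam p s -> inL2P lam p s' ->
  submodels lam M p s q -> submodels lam M p s' q' -> 0 < r ->
  (sqnormP lam p (fun x => (s x - s' x)%R) <= (r ^+ 2)%:E)%E ->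
  `|v' - v| <= k * r ->
  (\forall eps \near 0^'+, `|nu (q' eps) - nu p - eps *: v'| <= r * eps) ->
  \forall eps \near 0^'+, `|nu (q eps) - nu p - eps *: v| <= (4 * c + 1 + k) * r * eps.
Proof.
move=> sL2 s'L2 qs q's r0 ss' vv' q'_exp.
have nu_close := nu_submodels_near_le sL2 s'L2 qs q's r0 ss'.
near=> eps.
have eps0 : 0 < eps by near: eps; exact: nbhs_right_gt.
have nu_qq' : `|nu (q eps) - nu (q' eps)| <= 4 * c * r * eps by near: eps.
have nu_q' : `|nu (q' eps) - nu p - eps *: v'| <= r * eps by near: eps.
have -> : nu (q eps) - nu p - eps *: v = (nu (q eps) - nu (q' eps))
    + (nu (q' eps) - nu p - eps *: v') + eps *: (v' - v).
  by rewrite scalerBr !addrA subrK subrK.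
apply: le_trans (ler_normD _ _) _; rewrite normrZ (ger0_norm (ltW eps0)).
apply: le_trans (lerD (ler_normD _ _) (ler_wpM2l (ltW eps0) vv')) _.
apply: le_trans (lerD (lerD nu_qq' nu_q') (lexx _)) _.
by rewrite le_eqVlt; apply/orP; left; apply/eqP; ring.
Unshelve. all: by end_near.
Qed.

End Pathwise.

Theorem lemma2 (R : realType) (d : measure_display) (Z : measurableType d)
    (lam : {measure set Z -> \bar R}) (H : normedModType R)
    (M : set (Z -> R)) (p : Z -> R) (nu : (Z -> R) -> H) (eta : (Z -> R) -> H) :
  sigma_finite setT lam ->
  real_separable_hilbert H ->
  (forall q, M q -> is_density lam q) ->
  M p ->
  (* (i) *)
  (lin_on (tangent_space lam M p) eta /\ bounded_on lam p (tangent_space lam M p) eta /\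
   exists S : set (Z -> R),
     [/\ S `<=` inL2P lam p,
         L2P_closure lam p S = tangent_space lam M p &
         forall s, S s -> exists2 q, submodels lam M p s q &
           forall e : R, 0 < e -> \forall eps \near 0^'+,
             `|nu (q eps) - nu p - eps *: eta s| <= e * eps]) ->
  (* (ii) *)
  (exists c delta : R, [/\ 0 < c, 0 < delta &
     forall p1 p2, M p1 -> M p2 -> hellinger lam p p1 <= delta ->
       hellinger lam p p2 <= delta -> `|nu p1 - nu p2| <= c * hellinger lam p1 p2]) ->
  pathwise_differentiable lam M nu p eta.
Proof.
move=> _ _ M_density Mp [etaL [etaB [S [S_L2 clS_T S_diff]]]] [c [dl [c0 dl0 nu_lip]]].
have [mp p_ge0 _] := M_density _ Mp.
have TB := tangent_spaceB lam p mp p_ge0 M.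
split=> //; first exact: bounded_lin_cont_on.
move=> s ts q qs e e0; have [C etaC] := etaB.
pose K := 4 * c + 1 + `|C|; pose r := e / K.
have K0 : 0 < K by rewrite /K; have := normr_ge0 C; lra.
have r0 : 0 < r by rewrite divr_gt0.
have Ts := tangent_set_sub_space lam p M _ ts.
have [_ /(_ r r0) [s' Ss' ss']] : L2P_closure lam p S s by rewrite clS_T.
have Ts' : tangent_space lam M p s' by rewrite -clS_T; exact: L2P_closure_sub.
have [q' q's q'_diff] := S_diff s' Ss'.
have eta_close : `|eta s' - eta s| <= `|C| * r.
  rewrite distrC -(lin_onB etaL Ts Ts').
  exact: bounded_on_le etaC (TB _ _ Ts Ts') (ltW r0) (ltW ss').
have := submodel_expansion_transfer lam p mp p_ge0 M M_density nu c dl (ltW c0) dl0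
  nu_lip ts.1 (S_L2 _ Ss') qs q's r0 (ltW ss') eta_close (q'_diff r r0).
by rewrite /r -/K [K * _]mulrC divfK ?gt_eqF.
Qed.
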